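(* Fix a cooperative Markov game and a stationary joint policy $\pi$ as described in the context. For every $t_{loss}\in\{0,1,2,\ldots\}\cup\{\infty\}$, $$KL\big(\Gamma^{full}\,\|\,\Gamma^{img}_{0}\big)\;\ge\; KL\big(\Gamma^{full}\,\|\,\Gamma^{img}_{t_{loss}}\big).$$
   Context: Multiagent model: there are $N$ agents. Agent $i$ is modeled by a finite MDP $\mathcal{M}^i=(\mathcal{S}^i,s_I^i,\mathcal{A}^i,\mathcal{T}^i)$. Here $\mathcal{S}^i$ is a finite state set, $s_I^i\in\mathcal{S}^i$ is the initial state, $\mathcal{A}^i$ is a finite action set, and $\mathcal{T}^i:\mathcal{S}^i\times\mathcal{A}^i\to\Delta(\mathcal{S}^i)$ is the transition kernel. The cooperative Markov game has joint state set $\mathbf{S}=\prod_i\mathcal{S}^i$, joint initial state $\mathbf{s}_I=(s_I^1,\dots,s_I^N)$, and joint action set $\mathbf{A}=\prod_i\mathcal{A}^i$. Its transition kernel is $\mathbf{T}(\mathbf{s},\mathbf{a},\mathbf{y})=\prod_{i}\mathcal{T}^i(s^i,a^i,y^i)$. A stationary joint policy is a map $\pi:\mathbf{S}\to\Delta(\mathbf{A})$. A joint path is an infinite sequence $\mathbf{s}_0\mathbf{a}_0\mathbf{s}_1\mathbf{a}_1\cdots\in(\mathbf{S}\times\mathbf{A})^\omega$ with $\mathbf{s}_0=\mathbf{s}_I$. All random sampling below is mutually independent given the stated conditioning. Full-communication execution: at each time $t$, $\mathbf{a}_t\sim\pi(\mathbf{s}_t)$ is drawn once for the whole team. Each agent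 $i$ then moves to $s^i_{t+1}\sim\mathcal{T}^i(s^i_t,a^i_t)$. $\Gamma^{full}$ denotes the resulting distribution over joint paths. Imaginary play with loss time $t_{loss}\in\{0,1,\dots\}\cup\{\infty\}$ (Algorithm 1): - For $t<t_{loss}$, the team acts exactly as under full communication. Each agent $i$ records $\hat s^j_{t,i}=s^j_t$ for all $j\ne i$, and records $\hat{\mathbf a}_{t,i}=\mathbf a_t$. - For $t\ge t_{loss}$, each agent $i$ acts separately and does not observe the others. First it sets its imaginary teammate states. If $t=0$, it sets $\hat s^j_{0,i}=s_I^j$ for $j\neq i$. Otherwise it samples $\hat s^j_{t,i}\sim\mathcal{T}^j(\hat s^j_{t-1,i},\hat a^j_{t-1,i})$ for $j\ne i$, where $\hat a^j_{t-1,i}$ is the $j$-th component of $\hat{\mathbf a}_{t-1,i}$. - Agent $i$ then samples its own joint action $\hat{\mathbf a}_{t,i}\sim\pi(\hat s^1_{t,i},\dots,\hat s^{i-1}_{t,i},s^i_t,\hat s^{i+1}_{t,i},\dots,\hat s^N_{t,i})$. - Agent $i$ executes only its own component $\hat a^i_{t,i}$, and moves to $s^i_{t+1}\sim\mathcal{T}^i(s^i_t,\hat a^i_{t,i})$. - The realized joint action at time $t$ is $\mathbf a_t=(\hat a^1_{t,1},\dots,\hat a^N_{t,N})$. $\Gamma^{img}_{t_{loss}}$ denotes the induced distribution over realized joint paths. Note $\Gamma^{img}_\infty=\Gamma^{full}$. $KL$ denotes Kullback–Leibler divergence between distributions on joint paths. *)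

From HB Require Import structures.
From mathcomp Require Import all_boot all_order all_algebra.
From mathcomp Require Import all_classical all_reals all_analysis.
Set Implicit Arguments. Unset Strict Implicit. Unset Printing Implicit Defensive.
Import Order.TTheory GRing.Theory Num.Theory.
Local Open Scope ring_scope.

Section Game.
Variable R : realType.
Variable N : nat.
Variables (S A : 'I_N -> finType).

Definition jstate := {dffun forall i : 'I_N, S i}.
Definition jact := {dffun forall i : 'I_N, A i}.

Variable sI : forall i, S i.
Variable T : forall i, S i -> A i -> S i -> R.
Variable pi : jstate -> jact -> R.

Definition jinit : jstate := [ffun i => sI i].

Definition jtrans (s : jstate) (a : jact) (y : jstate) : R :=
  \prod_(i < N) T (s i) (a i) (y i).

Definition ind (b : bool) : R := (b : nat)%:R.

Definition get (X : Type) (H : nat) (x : {ffun 'I_H -> X}) (t : nat) : option X :=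
  omap x (insub t : option 'I_H).

(* loss time: Some k = k, None = infinity; communication is lost at time t iff t >= t_loss *)
Definition lost (tl : option nat) (t : nat) : bool :=
  if tl is Some k then (k <= t)%N else false.

Section Horizon.
Variable tl : option nat.
Variable H : nat.
Definition prefix := {ffun 'I_H -> (jstate * jact)%type}.
(* hidden variables: for each agent i and time t, its record
   (hat s_{t,i}, hat a_{t,i}); the i-th component of hat s_{t,i} stands for s^i_t *)
Definition hidden := {ffun 'I_N -> {ffun 'I_H -> (jstate * jact)%type}}.

Definition state_fac (x : prefix) (t : nat) : R :=
  match get x t with
  | None => 0
  | Some (st, _) =>
      if t is u.+1 then
        match get x u with
        | Some (sp, ap) => jtrans sp ap st
        | None => 0
        end
      else ind (st == jinit)
  end.

Definition act_fac (x : prefix) (h : hidden) (t : nat) : R :=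
  match get x t with
  | None => 0
  | Some (st, at0) =>
    if ~~ lost tl t then
      (* full communication: one joint draw, every agent records (s_t, a_t) *)
      pi st at0 * \prod_(i < N) ind (get (h i) t == Some (st, at0))
    else
      (* imaginary play: each agent samples imaginary teammates and its own joint action *)
      \prod_(i < N)
        match get (h i) t with
        | None => 0
        | Some (hs, ha) =>
            ind (hs i == st i) *
            (\prod_(j < N | j != i)
               (if t is u.+1 then
                  match get (h i) u with
                  | Some (hsp, hap) => T (hsp j) (hap j) (hs j)
                  | None => 0
                  end
                else ind (hs j == sI j))) *
            pi hs ha * ind (ha i == at0 i)
        end
  end.

Definition joint (x : prefix) (h : hidden) : R :=
  \prod_(t < H) (state_fac x t * act_fac x h t).

(* marginal law of the realized horizon-H prefix under Algorithm 1 with loss time tl *)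
Definition Gamma_img (x : prefix) : R := \sum_(h : hidden) joint x h.
End Horizon.

Definition Gamma_full := Gamma_img None.

Local Open Scope ereal_scope.
Definition kl_term (p q : R) : \bar R :=
  if p == 0%R then 0 else if q == 0%R then +oo else (p * ln (p / q))%:E.

Definition KL_horizon (P Q : forall H, prefix H -> R) (H : nat) : \bar R :=
  \sum_(x : prefix H) kl_term (P H x) (Q H x).

(* KL divergence between the laws on infinite joint paths: supremum over horizons
   of the KL divergences of the finite-dimensional marginals *)
Definition KL (P Q : forall H, prefix H -> R) : \bar R :=
  ereal_sup (range (KL_horizon P Q)).
End Game.

(* Let P be the law of the length-H prefix of the play under full communication and
   Q_k the law under imaginary play with loss time k.  Up to time k the two processes
   coincide; afterwards agent i draws its imaginary teammates exactly as P does, given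
   what it has seen: the common history x_<k before the loss and its own trajectory x^i.
   Hence Q_k(x) = P(x_<k) * prod_i P(x^i | x_<k), and
     KL(P || Q_0) - KL(P || Q_k) = E_P [ln Q_k - ln Q_0]
   is a sum of conditional mutual informations: the chain-rule terms of the total
   correlation of the agents' histories before k, and I(x_<k ; x^i | x^i_<k) for each i.
   These are nonnegative by ln r <= r - 1, and KL on paths is a supremum over horizons. *)

From Pilot Require Import Defs.
From HB Require Import structures.
From mathcomp Require Import all_boot all_order all_algebra.
From mathcomp Require Import all_classical all_reals all_analysis.
From mathcomp Require Import ring lra.
Import Order.TTheory GRing.Theory Num.Theory.
Set Implicit Arguments. Unset Strict Implicit. Unset Printing Implicit Defensive.
Local Open Scope ring_scope.

Lemma ln_le_subr1 (R : realType) (r : R) : 0 < r -> ln r <= r - 1.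
Proof. by move=> r0; have := @le_ln1Dx R (r - 1); rewrite addrCA subrr addr0; apply; lra. Qed.

Lemma ln_prod (R : realType) (I : finType) (F : I -> R) :
  (forall i, 0 < F i) -> ln (\prod_i F i) = \sum_i ln (F i).
Proof.
move=> F_gt0; apply: (big_ind2 (fun a b => 0 < a /\ ln a = b) _ _ _).2.
- by rewrite ln1.
- by move=> a1 a2 b1 b2 [a1_gt0 <-] [a2_gt0 <-]; rewrite mulr_gt0 // lnM.
- by [].
Qed.

Lemma sum_dffun_prod (R : comPzRingType) (I : finType) (T_ : I -> finType)
    (F : forall i, T_ i -> R) :
  \sum_(s : {dffun forall i, T_ i}) \prod_i F i (s i) = \prod_i \sum_(y : T_ i) F i y.
Proof.
rewrite (reindex (@dffun_of_fprod I T_)); last exact/onW_bij/dffun_of_fprod_bij.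
pose P_ i := [ffun y : T_ i => F i y].
transitivity (\sum_(t : fprod T_) \prod_(i in I) P_ i (t i)).
  by apply: eq_bigr => t _; apply: eq_bigr => i _; rewrite !ffunE.
rewrite (@big_fprod _ 0 1 *%R +%R) /=.
transitivity (\prod_i \sum_(j in tagged_with T_ i) untag 0 (P_ i) j).
  by rewrite bigA_distr_big_dep.
apply: eq_bigr => i _; rewrite (big_tag (op := +%R) F i); apply: eq_bigr => j _.
by rewrite /untag; case: eqP => // e; rewrite ffunE.
Qed.

Section ConditionalMutualInformation.
Variables (R : realType) (X : finType) (P : X -> R).
Hypothesis P_ge0 : forall x, 0 <= P x.

Definition marginal {Y : eqType} (f : X -> Y) (x : X) : R :=
  \sum_(y | f y == f x) P y.

Definition cmi_density {Y1 Y2 Y0 : eqType} (f1 : X -> Y1) (f2 : X -> Y2)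
    (f0 : X -> Y0) (x : X) : R :=
  ln (marginal (fun z => (f1 z, f2 z)) x) + ln (marginal f0 x)
  - ln (marginal f1 x) - ln (marginal f2 x).

(* When f0 is a function of f1 and of f2, this is the conditional mutual information
   I(f1 ; f2 | f0) under the weight P. *)
Definition cond_mutual_info {Y1 Y2 Y0 : eqType} (f1 : X -> Y1) (f2 : X -> Y2)
    (f0 : X -> Y0) : R :=
  \sum_x P x * cmi_density f1 f2 f0 x.

Lemma marginalE {Y : eqType} (f : X -> Y) x :
  marginal f x = \sum_y (f y == f x)%:R * P y.
Proof.
by rewrite /marginal big_mkcond; apply: eq_bigr => y _; case: eqP; rewrite ?mul1r ?mul0r.
Qed.

Lemma marginal_ge {Y : eqType} (f : X -> Y) x : P x <= marginal f x.
Proof. by rewrite /marginal (bigD1 x) //= lerDl sumr_ge0. Qed.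

Lemma marginal_ge0 {Y : eqType} (f : X -> Y) x : 0 <= marginal f x.
Proof. exact: sumr_ge0. Qed.

Lemma marginal_gt0 {Y : eqType} (f : X -> Y) x : 0 < P x -> 0 < marginal f x.
Proof. by move=> Px; apply: lt_le_trans Px _; apply: marginal_ge. Qed.

Lemma eq_marginal {Y : eqType} (f : X -> Y) x y :
  f x = f y -> marginal f x = marginal f y.
Proof. by rewrite /marginal => ->. Qed.

Section Coarsening.
Variables (Y1 Y2 Y0 : eqType) (f1 : X -> Y1) (f2 : X -> Y2) (f0 : X -> Y0).
Hypotheses (f10 : forall x y, f1 x = f1 y -> f0 x = f0 y)
           (f20 : forall x y, f2 x = f2 y -> f0 x = f0 y).

Let f12 z := (f1 z, f2 z).
Let ratio x :=
  marginal f1 x * marginal f2 x / (marginal f12 x * marginal f0 x).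

Lemma cmi_density_ge x : P x - P x * ratio x <= P x * cmi_density f1 f2 f0 x.
Proof.
have [->|nz] := eqVneq (P x) 0; first by rewrite !mul0r subr0.
have Px : 0 < P x by rewrite lt_def nz P_ge0.
have p12 := marginal_gt0 f12 Px; have p0 := marginal_gt0 f0 Px.
have p1 := marginal_gt0 f1 Px; have p2 := marginal_gt0 f2 Px.
have ratio_gt0 : 0 < ratio x by rewrite divr_gt0 // mulr_gt0.
have := ln_le_subr1 ratio_gt0.
rewrite /ratio ln_div ?posrE ?mulr_gt0 // !lnM ?posrE // => ln_ratio.
rewrite -[X in X - _]mulr1 -mulrBr ler_wpM2l ?P_ge0 // /cmi_density; lra.
Qed.

Lemma sum_fiber_ratio_le y z :
  \sum_x (f12 x == (f1 z, f2 y))%:R * (P x / (marginal f12 x * marginal f0 x))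
  <= (f0 z == f0 y)%:R / marginal f0 y.
Proof.
have [x0 /eqP [f1x0 f2x0] | fiber0] := pickP (fun x => f12 x == (f1 z, f2 y)); last first.
  rewrite big1 ?divr_ge0 ?ler0n ?marginal_ge0 // => x _.
  by rewrite fiber0 mul0r.
have f0zy : f0 z = f0 y by rewrite -(f10 f1x0) (f20 f2x0).
(* All points of the (f1, f2)-fiber share their (f1, f2)- and f0-marginals. *)
have -> : \sum_x (f12 x == (f1 z, f2 y))%:R * (P x / (marginal f12 x * marginal f0 x))
    = marginal f12 x0 / (marginal f12 x0 * marginal f0 y).
  rewrite [X in X / _]marginalE big_distrl /=; apply: eq_bigr => x _.
  rewrite /f12 -f1x0 -f2x0; case: eqP => [[f1x f2x] | _]; last by rewrite !mul0r.
  have f0xy : f0 x = f0 y by apply: f20; rewrite f2x f2x0.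
  have f12x : f12 x = f12 x0 by rewrite /f12 f1x f2x.
  by rewrite mulrA (eq_marginal f12x) (eq_marginal f0xy).
rewrite f0zy eqxx mul1r.
have [->|nz] := eqVneq (marginal f12 x0) 0; first by rewrite !mul0r invr_ge0 marginal_ge0.
by rewrite invfM mulVKf.
Qed.

Lemma sum_ratio_le : \sum_x P x * ratio x <= \sum_x P x.
Proof.
have expand : \sum_x P x * ratio x = \sum_y \sum_z P y * P z *
    \sum_x (f12 x == (f1 z, f2 y))%:R * (P x / (marginal f12 x * marginal f0 x)).
  transitivity (\sum_x \sum_z \sum_y ((f1 z == f1 x)%:R * P z) *
      ((f2 y == f2 x)%:R * P y) * (P x / (marginal f12 x * marginal f0 x))).
    apply: eq_bigr => x _; rewrite /ratio [LHS](_ : _ = marginal f1 x * marginal f2 x *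
        (P x / (marginal f12 x * marginal f0 x))); last by ring.
    rewrite !marginalE -mulrA big_distrl /=; apply: eq_bigr => z _.
    by rewrite big_distrl big_distrr /=; apply: eq_bigr => y _; ring.
  rewrite exchange_big /=; under eq_bigr do rewrite exchange_big /=.
  rewrite exchange_big /=; apply: eq_bigr => y _; apply: eq_bigr => z _.
  rewrite big_distrr /=; apply: eq_bigr => x _.
  rewrite /f12 xpair_eqE (eq_sym (f1 x)) (eq_sym (f2 x)).
  by case: (f1 z == f1 x); case: (f2 y == f2 x); rewrite /= ?mulr1n ?mulr0n; ring.
rewrite expand; apply: le_trans (_ : _ <= \sum_y \sum_z P y * P z *
    ((f0 z == f0 y)%:R / marginal f0 y)) _.
  do 2 (apply: ler_sum => ? _); apply: ler_wpM2l; first by rewrite mulr_ge0.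
  exact: sum_fiber_ratio_le.
apply: ler_sum => y _.
have -> : \sum_z P y * P z * ((f0 z == f0 y)%:R / marginal f0 y)
    = P y * marginal f0 y / marginal f0 y.
  rewrite [X in _ * X / _]marginalE big_distrr big_distrl /=.
  by apply: eq_bigr => z _; ring.
have [->|nz] := eqVneq (marginal f0 y) 0; first by rewrite invr0 mulr0.
by rewrite mulfK.
Qed.

Lemma cond_mutual_info_ge0 : 0 <= cond_mutual_info f1 f2 f0.
Proof.
apply: le_trans (_ : 0 <= \sum_x (P x - P x * ratio x)) (ler_sum _ _).
  by rewrite sumrB subr_ge0 sum_ratio_le.
by move=> x _; exact: cmi_density_ge.
Qed.

End Coarsening.
End ConditionalMutualInformation.

Lemma get_ord (Y : Type) (H : nat) (g : {ffun 'I_H -> Y}) (t : 'I_H) :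
  Defs.get g t = Some (g t).
Proof. by rewrite /Defs.get valK. Qed.

Lemma get_lt (Y : Type) (H : nat) (g : {ffun 'I_H -> Y}) (u : nat) (uH : (u < H)%N) :
  Defs.get g u = Some (g (Ordinal uH)).
Proof. by rewrite /Defs.get insubT. Qed.

Lemma ind_ge0 (R : realType) (b : bool) : 0 <= ind R b.
Proof. exact: ler0n. Qed.

Lemma indT (R : realType) : ind R true = 1.
Proof. exact: mulr1n. Qed.

Lemma kl_termE (R : realType) (p q : R) :
  0 <= p -> (0 < p -> 0 < q) -> kl_term p q = (p * ln (p / q))%:E.
Proof.
rewrite /kl_term le_eqVlt => /orP [/eqP <- | p_gt0 /(_ p_gt0) q_gt0].
  by rewrite eqxx mul0r.
by rewrite gt_eqF // gt_eqF.
Qed.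

Section Game.
Variables (R : realType) (N : nat) (S A : 'I_N -> finType).
Variables (sI : forall i, S i) (T : forall i, S i -> A i -> S i -> R)
  (pi : jstate S -> jact A -> R).
Hypotheses (T_ge0 : forall i (s : S i) a y, 0 <= T s a y)
  (T_sum1 : forall i (s : S i) a, \sum_(y : S i) T s a y = 1)
  (pi_ge0 : forall s a, 0 <= pi s a)
  (pi_sum1 : forall s, \sum_(a : jact A) pi s a = 1).

Lemma ind_jinit (s : jstate S) :
  ind R (s == jinit sI) = \prod_i ind R (s i == sI i).
Proof.
have [->|ne] := eqVneq s (jinit sI).
  by rewrite indT big1 // => i _; rewrite ffunE eqxx indT.
have [i ni] : exists i, s i != sI i.
  apply/existsP; apply: contraNT ne; rewrite negb_exists => /forallP si.
  by apply/eqP/ffunP => i; rewrite ffunE; apply/eqP/negPn/si.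
by rewrite (bigD1 i) //= (negbTE ni) mul0r.
Qed.

Lemma jpair_eqE (p q : jstate S * jact A) :
  (p == q) = [forall i, (p.1 i == q.1 i) && (p.2 i == q.2 i)].
Proof.
apply/eqP/forallP => [-> i | pq]; first by rewrite !eqxx.
case: p q pq => [s a] [s' a'] /= pq.
by congr pair; apply/ffunP => i; case/andP: (pq i) => /eqP ? /eqP.
Qed.

Variable H : nat.
Notation X := (Defs.prefix S A H).
Notation state_fac := (@state_fac R N S A sI T H).
Notation Gamma_full := (@Gamma_full R N S A sI T pi H).
Notation Gamma_img tl := (@Gamma_img R N S A sI T pi tl H).

Definition agent_path (i : 'I_N) (x : X) : {ffun 'I_H -> (S i * A i)%type} :=
  [ffun t => ((x t).1 i, (x t).2 i)].

Definition agent_step (i : 'I_N) (x : X) (t : nat) : R :=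
  match Defs.get (agent_path i x) t with
  | None => 0
  | Some (st, _) =>
      if t is u.+1 then
        match Defs.get (agent_path i x) u with
        | Some (sp, ap) => T sp ap st
        | None => 0
        end
      else ind R (st == sI i)
  end.

Lemma state_fac_agents (x : X) (t : 'I_H) : state_fac x t = \prod_i agent_step i x t.
Proof.
rewrite /state_fac /agent_step get_ord.
under eq_bigr do rewrite get_ord ffunE.
case: t => [[|u] uH] /=; first by case: (x _) => st a /=; rewrite ind_jinit.
rewrite (get_lt x (ltnW uH)).
under [RHS]eq_bigr do rewrite (get_lt _ (ltnW uH)) ffunE.
by rewrite /jtrans; case: (x (Ordinal uH)) => st a; case: (x (Ordinal _)).
Qed.

Lemma agent_step_ge0 i x t : 0 <= agent_step i x t.
Proof.
rewrite /agent_step; case: (Defs.get _ t) => [[st a]|] //.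
case: t => [|u]; first exact: ind_ge0.
by case: (Defs.get _ u) => [[sp ap]|].
Qed.

Lemma state_fac_ge0 x (t : 'I_H) : 0 <= state_fac x t.
Proof. by rewrite state_fac_agents prodr_ge0 // => i _; exact: agent_step_ge0. Qed.

Lemma state_fac_eq_prefix (x y : X) (t : 'I_H) :
  (forall u : 'I_H, (u <= t)%N -> y u = x u) -> state_fac y t = state_fac x t.
Proof.
move=> yx; have get_yx n : (n <= t)%N -> Defs.get y n = Defs.get x n.
  by move=> nt; rewrite /Defs.get; case: insubP => [u _ un|] //=; rewrite yx // un.
rewrite /state_fac get_yx //; move: yx get_yx; case: t => [[|u] uH] //= _ get_yx.
by rewrite get_yx // leqnSn.
Qed.

Section LossTime.
Variable k : nat.

Definition prefix_weight (x : X) : R :=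
  \prod_(t < H | (t < k)%N) (state_fac x t * pi (x t).1 (x t).2).

Definition agent_tail_weight (x : X) (i : 'I_N) : R :=
  \prod_(t < H | (k <= t)%N) agent_step i x t.

(* The factor of agent i in the lost branch of [act_fac], for its record [g]. *)
Definition imag_step (st : jstate S) (at0 : jact A) (g : X) (i : 'I_N) (t : nat) : R :=
  match Defs.get g t with
  | None => 0
  | Some (hs, ha) =>
      ind R (hs i == st i) *
      (\prod_(j < N | j != i)
         (if t is u.+1 then
            match Defs.get g u with
            | Some (hsp, hap) => T (hsp j) (hap j) (hs j)
            | None => 0
            end
          else ind R (hs j == sI j))) *
      pi hs ha * ind R (ha i == at0 i)
  end.

Definition record_weight (x : X) (i : 'I_N) (t : 'I_H) (g : X) : R :=
  if (t < k)%N then ind R (Defs.get g t == Some (x t))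
  else imag_step (x t).1 (x t).2 g i t.

Definition record_path_weight (x : X) (i : 'I_N) (g : X) : R :=
  \prod_(t < H) record_weight x i t g.

Definition imag_weight (x : X) (i : 'I_N) : R := \sum_(g : X) record_path_weight x i g.

Lemma act_fac_split tl (tlE : forall t : 'I_H, lost tl t = (k <= t)%N) x
    (h : hidden S A H) (t : 'I_H) :
  act_fac sI T pi tl x h t =
  (if (t < k)%N then pi (x t).1 (x t).2 else 1) * \prod_i record_weight x i t (h i).
Proof.
rewrite /act_fac get_ord tlE /record_weight.
by case: ltnP => _ /=; case: (x t) => st at0; rewrite ?mul1r.
Qed.

Lemma Gamma_img_factor tl (tlE : forall t : 'I_H, lost tl t = (k <= t)%N) x :
  Gamma_img tl x = prefix_weight x * \prod_i (agent_tail_weight x i * imag_weight x i).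
Proof.
have joint_split (h : hidden S A H) : joint sI T pi tl x h =
    (\prod_(t < H) state_fac x t * \prod_(t < H | (t < k)%N) pi (x t).1 (x t).2) *
    \prod_i record_path_weight x i (h i).
  rewrite /joint; under [LHS]eq_bigr do rewrite (act_fac_split tlE).
  by rewrite big_split big_split /= -big_mkcond mulrA [in RHS]exchange_big.
have state_split : \prod_(t < H) state_fac x t =
    \prod_(t < H | (t < k)%N) state_fac x t * \prod_i agent_tail_weight x i.
  rewrite (bigID (fun t : 'I_H => (t < k)%N)) /=; congr (_ * _).
  under eq_bigr do rewrite state_fac_agents.
  by rewrite exchange_big; apply: eq_bigr => i _; apply: eq_bigl => t; rewrite -leqNgt.
rewrite /Defs.Gamma_img (eq_bigr _ (fun h _ => joint_split h)) -big_distrr /=.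
rewrite -bigA_distr_bigA state_split /prefix_weight big_split big_split /=.
by rewrite -!mulrA; congr (_ * _); rewrite mulrCA.
Qed.

End LossTime.

Lemma imag_weight_full x i : imag_weight H x i = 1.
Proof.
rewrite /imag_weight (bigD1 x) //= big1 => [|g gx].
  rewrite addr0 /record_path_weight big1 // => t _.
  by rewrite /record_weight ltn_ord get_ord eqxx indT.
have [t gtx] : exists t, g t != x t.
  apply/existsP; apply: contraNT gx; rewrite negb_exists => /forallP gx.
  by apply/eqP/ffunP => t; apply/eqP/negPn/gx.
rewrite /record_path_weight (bigD1 t) //= /record_weight ltn_ord get_ord.
by rewrite (inj_eq Some_inj) (negbTE gtx) mul0r.
Qed.

Lemma Gamma_full_prefix_weight x : Gamma_full x = prefix_weight H x.
Proof.
rewrite /Defs.Gamma_full (@Gamma_img_factor H None) => [|t]; last by rewrite /lost leqNgt ltn_ord.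
rewrite big1 ?mulr1 // => i _.
rewrite imag_weight_full mulr1 /agent_tail_weight big_pred0 // => t.
by rewrite leqNgt ltn_ord.
Qed.

Lemma prefix_weight_ge0 k x : 0 <= prefix_weight k x.
Proof. by apply: prodr_ge0 => t _; rewrite mulr_ge0 ?state_fac_ge0. Qed.

Lemma Gamma_full_ge0 x : 0 <= Gamma_full x.
Proof. by rewrite Gamma_full_prefix_weight prefix_weight_ge0. Qed.

(* Marginals of Gamma_full along [mask_proj m] are the laws of the sub-trajectory
   {(t, j) | m t j}. *)
Definition mask_proj (m : nat -> 'I_N -> bool) (x : X) :
    {ffun 'I_H -> {dffun forall i : 'I_N, option (S i * A i)}} :=
  [ffun t : 'I_H => [ffun i => if m t i then Some ((x t).1 i, (x t).2 i) else None]].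

Lemma mask_proj_eqE m (y x : X) :
  (mask_proj m y == mask_proj m x) =
  [forall t : 'I_H, forall i, m t i ==> ((y t).1 i == (x t).1 i) && ((y t).2 i == (x t).2 i)].
Proof.
apply/eqP/forallP => [yx t | yx].
  apply/forallP => i; apply/implyP => mti.
  move/(congr1 (fun p : {ffun 'I_H -> {dffun forall i, option (S i * A i)}} => p t i)): yx.
  by rewrite !ffunE mti => -[-> ->]; rewrite !eqxx.
apply/ffunP => t; apply/ffunP => i; rewrite !ffunE; case: ifP => // mti.
by move/forallP/(_ i): (yx t); rewrite mti => /andP [/eqP -> /eqP ->].
Qed.

Lemma eq_mask_proj (m m' : nat -> 'I_N -> bool) : m =2 m' -> mask_proj m = mask_proj m'.
Proof. by move=> mm'; rewrite /mask_proj (funext (fun t => funext (mm' t))). Qed.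

Lemma mask_proj_sub (m0 m1 : nat -> 'I_N -> bool) (y x : X) :
  (forall t i, m0 t i -> m1 t i) ->
  mask_proj m1 y = mask_proj m1 x -> mask_proj m0 y = mask_proj m0 x.
Proof.
move=> m01 /eqP; rewrite mask_proj_eqE => /forallP yx; apply/eqP; rewrite mask_proj_eqE.
apply/forallP => t; apply/forallP => i; apply/implyP => m0ti.
by move/forallP/(_ i)/implyP: (yx t); apply; apply: m01.
Qed.

Lemma marginal_mask_pair (Q : X -> R) (m1 m2 : nat -> 'I_N -> bool) x :
  marginal Q (fun z => (mask_proj m1 z, mask_proj m2 z)) x =
  marginal Q (mask_proj (fun t i => m1 t i || m2 t i)) x.
Proof.
apply: eq_bigl => y; rewrite xpair_eqE !mask_proj_eqE.
apply/andP/forallP => [[/forallP y1 /forallP y2] t | y12].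
  apply/forallP => i; apply/implyP => /orP [] mti.
    by move/forallP/(_ i)/implyP: (y1 t); apply.
  by move/forallP/(_ i)/implyP: (y2 t); apply.
by split; apply/forallP => t; apply/forallP => i; apply/implyP => mti;
  move/forallP/(_ i)/implyP: (y12 t); apply; rewrite mti ?orbT.
Qed.


Lemma mask_prefix_eqE k (y x : X) :
  (mask_proj (fun t _ => (t < k)%N) y == mask_proj (fun t _ => (t < k)%N) x) =
  [forall t : 'I_H, (t < k)%N ==> (y t == x t)].
Proof.
rewrite mask_proj_eqE; apply: eq_forallb => t.
by case: (t < k)%N; rewrite /= ?jpair_eqE //; apply/forallP.
Qed.

Definition set_step (x : X) (t0 : 'I_H) (v : jstate S * jact A) : X :=
  [ffun t => if t == t0 then v else x t].

Lemma sum_next_step x (t0 : 'I_H) :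
  \sum_(v : jstate S * jact A) state_fac (set_step x t0 v) t0 * pi v.1 v.2 = 1.
Proof.
transitivity (\sum_(s : jstate S) \sum_(a : jact A) state_fac (set_step x t0 (s, a)) t0 * pi s a).
  by rewrite pair_bigA; apply: eq_bigr => -[s a].
rewrite /state_fac; case: t0 => [[|u] uH].
  under eq_bigr do under eq_bigr do rewrite (get_lt _ uH) ffunE eqxx /=.
  under eq_bigr do rewrite -big_distrr /= pi_sum1 mulr1.
  by rewrite (bigD1 (jinit sI)) //= eqxx indT big1 ?addr0 // => s /negbTE ->.
have uH' := ltnW uH.
have ne : (Ordinal uH' == Ordinal uH) = false by rewrite -val_eqE /= ltn_eqF.
under eq_bigr do under eq_bigr do
  rewrite (get_lt _ uH) ffunE eqxx /= (get_lt _ uH') ffunE ne.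
case: (x (Ordinal uH')) => sp ap.
under eq_bigr do rewrite -big_distrr /= pi_sum1 mulr1.
by rewrite /jtrans (sum_dffun_prod (fun i y => T (sp i) (ap i) y)) big1 // => i _; exact: T_sum1.
Qed.

Lemma marginal_prefix_step (Q : X -> R) k (t0 : 'I_H) x : val t0 = k ->
  marginal Q (mask_proj (fun t _ => (t < k)%N)) x =
  \sum_v marginal Q (mask_proj (fun t _ => (t < k.+1)%N)) (set_step x t0 v).
Proof.
move=> t0k; rewrite /marginal (partition_big (fun y : X => y t0) xpredT) //=.
apply: eq_bigr => v _; apply: eq_bigl => y; rewrite !mask_prefix_eqE.
apply/andP/forallP => [[/forallP yx /eqP yv] t | yx].
  rewrite ffunE; have [-> | tt0] := eqVneq t t0; first by rewrite yv !eqxx implybT.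
  rewrite ltnS; apply/implyP => tk; apply/(implyP (yx t)).
  by rewrite ltn_neqAle tk andbT -t0k val_eqE.
split; last by have := implyP (yx t0); rewrite ffunE eqxx t0k ltnSn => /(_ isT).
apply/forallP => t; apply/implyP => tk; have := implyP (yx t) (leqW tk).
by rewrite ffunE -val_eqE t0k ltn_eqF.
Qed.

Lemma prefix_weight_set_step k (t0 : 'I_H) x v : val t0 = k ->
  prefix_weight k.+1 (set_step x t0 v) =
  prefix_weight k x * (state_fac (set_step x t0 v) t0 * pi v.1 v.2).
Proof.
move=> t0k; rewrite /prefix_weight (bigD1 t0) /= ?t0k //.
rewrite mulrC ffunE eqxx; congr (_ * _); apply: eq_big => t.
  by rewrite -val_eqE t0k ltnS; case: ltngtP.
move=> /andP [tk1 tt0]; have tk : (t < k)%N.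
  by move: tk1; rewrite ltnS leq_eqVlt -t0k val_eqE (negbTE tt0).
have setE (u : 'I_H) : (u <= t)%N -> set_step x t0 v u = x u.
  by move=> ut; rewrite ffunE -val_eqE t0k ltn_eqF // (leq_ltn_trans ut tk).
by rewrite (state_fac_eq_prefix setE) setE.
Qed.

(* Sum out the steps k, ..., H - 1 one at a time; each has total mass 1. *)
Lemma marginal_prefix k x :
  marginal Gamma_full (mask_proj (fun t _ => (t < k)%N)) x = prefix_weight k x.
Proof.
move: {2}(H - k)%N (erefl (H - k)%N) => d; elim: d k x => [|d IH] k x Hk.
  have {}Hk : (H <= k)%N by rewrite -subn_eq0 Hk.
  have tk (t : 'I_H) : (t < k)%N by apply: leq_trans (ltn_ord t) Hk.
  rewrite /marginal (eq_bigl (pred1 x)) => [|y]; last first.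
    rewrite mask_prefix_eqE; apply/forallP/eqP => [yx|-> t]; last by rewrite eqxx implybT.
    by apply/ffunP => t; apply/eqP; move/implyP: (yx t); apply.
  rewrite big_pred1_eq Gamma_full_prefix_weight; apply: eq_bigl => t.
  by rewrite ltn_ord tk.
have kH : (k < H)%N by rewrite -subn_gt0 Hk.
rewrite (@marginal_prefix_step _ _ (Ordinal kH)) //.
under eq_bigr do rewrite IH ?subnS ?Hk // (@prefix_weight_set_step k) //.
by rewrite -big_distrr /= sum_next_step mulr1.
Qed.

Lemma mask_proj_agree m (y x : X) (t : 'I_H) i :
  mask_proj m y = mask_proj m x -> m t i ->
  (y t).1 i = (x t).1 i /\ (y t).2 i = (x t).2 i.
Proof.
move=> /eqP; rewrite mask_proj_eqE => /forallP/(_ t)/forallP/(_ i)/implyP yx /yx.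
by case/andP => /eqP -> /eqP ->.
Qed.

Lemma prefix_weight_eq k (y x : X) :
  (forall t : 'I_H, (t < k)%N -> y t = x t) -> prefix_weight k y = prefix_weight k x.
Proof.
move=> yx; apply: eq_bigr => t tk; rewrite yx //; congr (_ * _).
by apply: state_fac_eq_prefix => u ut; apply: yx; apply: leq_ltn_trans tk.
Qed.

Section AgentMarginal.
Variables (k : nat) (i : 'I_N).
(* What agent i has seen when communication is lost at time k. *)
Let seen t j := (t < k)%N || (j == i).

Lemma seen_prefix (y x : X) (t : 'I_H) :
  mask_proj seen y = mask_proj seen x -> (t < k)%N -> y t = x t.
Proof.
move=> yx tk; apply/eqP; rewrite jpair_eqE; apply/forallP => j.
have seen_tj : seen t j by rewrite /seen tk.
by have [-> ->] := mask_proj_agree yx seen_tj; rewrite !eqxx.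
Qed.

Lemma seen_agent (y x : X) (t : 'I_H) :
  mask_proj seen y = mask_proj seen x -> (y t).1 i = (x t).1 i /\ (y t).2 i = (x t).2 i.
Proof. by move=> yx; apply: mask_proj_agree yx _; rewrite /seen eqxx orbT. Qed.

Lemma agent_path_seen (y x : X) :
  mask_proj seen y = mask_proj seen x -> agent_path i y = agent_path i x.
Proof. by move=> yx; apply/ffunP => t; rewrite !ffunE; case: (seen_agent t yx) => -> ->. Qed.

Lemma imag_step_agree (y : X) (t : 'I_H) (st : jstate S) (at0 : jact A) :
  (y t).1 i = st i -> (y t).2 i = at0 i ->
  imag_step st at0 y i t = (\prod_(j | j != i) agent_step j y t) * pi (y t).1 (y t).2.
Proof.
rewrite /imag_step /agent_step get_ord => yst yat.
under [in RHS]eq_bigr do rewrite get_ord ffunE.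
move: yst yat; case: t => [[|u] uH] /=.
  by case: (y _) => hs ha /= -> ->; rewrite !eqxx !indT mul1r mulr1.
rewrite (get_lt y (ltnW uH)) => yst yat.
under [in RHS]eq_bigr do rewrite (get_lt _ (ltnW uH)) ffunE.
move: yst yat; case: (y (Ordinal uH)) => hs ha /= -> ->.
by rewrite !eqxx !indT mul1r mulr1; case: (y (Ordinal _)).
Qed.

Definition teammates_weight (y : X) : R :=
  \prod_(t < H | (k <= t)%N) ((\prod_(j | j != i) agent_step j y t) * pi (y t).1 (y t).2).

Lemma record_path_weight_seen (y x : X) :
  mask_proj seen y = mask_proj seen x -> record_path_weight k x i y = teammates_weight y.
Proof.
move=> yx; rewrite /record_path_weight (bigID (fun t : 'I_H => (t < k)%N)) /=.
rewrite big1 ?mul1r => [|t tk]; last first.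
  by rewrite /record_weight tk get_ord (seen_prefix yx tk) eqxx indT.
apply: eq_big => [t | t tk]; first by rewrite -leqNgt.
have [yx1 yx2] := seen_agent t yx.
by rewrite /record_weight (negbTE tk) (imag_step_agree yx1 yx2).
Qed.

Lemma record_path_weight_unseen (y x : X) :
  mask_proj seen y != mask_proj seen x -> record_path_weight k x i y = 0.
Proof.
rewrite mask_proj_eqE negb_forall => /existsP [t].
rewrite negb_forall => /existsP [j]; rewrite negb_imply => /andP [seen_tj yx].
rewrite /record_path_weight (bigD1 t) //= /record_weight; case: ifP => tk.
  have ytx : y t != x t by apply: contraNneq yx => ->; rewrite !eqxx.
  by rewrite get_ord (inj_eq Some_inj) (negbTE ytx) mul0r.
move: seen_tj; rewrite /seen tk /= => /eqP ji; subst j.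
move: yx; rewrite /imag_step get_ord; case: (y t) => hs ha /=.
by case/nandP => /negbTE ->; rewrite ?(mul0r, mulr0).
Qed.

Lemma Gamma_full_seen (y x : X) : mask_proj seen y = mask_proj seen x ->
  Gamma_full y = prefix_weight k x * (agent_tail_weight k x i * teammates_weight y).
Proof.
move=> yx; rewrite Gamma_full_prefix_weight.
rewrite -(prefix_weight_eq (fun t tk => seen_prefix yx tk)).
rewrite /prefix_weight (bigID (fun t : 'I_H => (t < k)%N)) /=; congr (_ * _).
  by apply: eq_bigl => t; rewrite ltn_ord.
rewrite /agent_tail_weight /teammates_weight -big_split /=.
apply: eq_big => [t | t _]; first by rewrite ltn_ord -leqNgt.
rewrite state_fac_agents (bigD1 i) //= -!mulrA; congr (_ * _).
by rewrite /agent_step (agent_path_seen yx).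
Qed.

(* Summing out the imaginary records of agent i yields the P-marginal of what it has
   seen: imaginary play simulates the teammates with the full-communication law. *)
Lemma marginal_prefix_agent x :
  marginal Gamma_full (mask_proj seen) x =
  prefix_weight k x * agent_tail_weight k x i * imag_weight k x i.
Proof.
rewrite /marginal /imag_weight big_mkcond big_distrr /=; apply: eq_bigr => y _.
case: eqP => [yx | /eqP yx]; last by rewrite (record_path_weight_unseen yx) mulr0.
by rewrite (Gamma_full_seen yx) (record_path_weight_seen yx) mulrA.
Qed.

End AgentMarginal.

Notation marg m := (marginal Gamma_full (mask_proj m)).

Lemma marg_none x : marg (fun _ _ => false) x = 1.
Proof.
rewrite (@eq_mask_proj _ (fun t _ => (t < 0)%N)) => [|t j]; last by rewrite ltn0.
by rewrite marginal_prefix /prefix_weight big_pred0.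
Qed.

Lemma marg_gt0 m x : 0 < Gamma_full x -> 0 < marg m x.
Proof. by move=> Px; apply: (marginal_gt0 Gamma_full_ge0 (mask_proj m) Px). Qed.

Lemma ln_Gamma_img tl k (tlE : forall t : 'I_H, lost tl t = (k <= t)%N) x :
  0 < Gamma_full x ->
  0 < Gamma_img tl x /\
  ln (Gamma_img tl x) = ln (marg (fun t _ => (t < k)%N) x) +
    \sum_i (ln (marg (fun t j => (t < k)%N || (j == i)) x) - ln (marg (fun t _ => (t < k)%N) x)).
Proof.
move=> Px; set V := marg _ x; have V_gt0 : 0 < V := marg_gt0 _ Px.
set W := fun i => marg (fun t j => (t < k)%N || (j == i)) x.
have W_gt0 i : 0 < W i / V by rewrite divr_gt0 // marg_gt0.
have -> : Gamma_img tl x = V * \prod_i (W i / V).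
  rewrite (Gamma_img_factor tlE) /V marginal_prefix; congr (_ * _).
  apply: eq_bigr => i _; rewrite /W marginal_prefix_agent -marginal_prefix -/V.
  by rewrite [RHS]mulrC !mulrA mulVf ?mul1r ?gt_eqF.
rewrite mulr_gt0 ?prodr_gt0 // lnM ?posrE ?prodr_gt0 // ln_prod //; split => //.
by congr (_ + _); apply: eq_bigr => i _; rewrite ln_div ?posrE ?marg_gt0.
Qed.

Definition history_cmi k (n : 'I_N) : X -> R :=
  cmi_density Gamma_full (mask_proj (fun t j => (t < k)%N && (j < n)%N))
    (mask_proj (fun t j => (t < k)%N && (j == n))) (mask_proj (fun _ _ => false)).

(* [(t < 0) || (j == i)] selects agent i's trajectory, in the shape of [seen] at k = 0. *)
Definition agent_cmi k (i : 'I_N) : X -> R :=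
  cmi_density Gamma_full (mask_proj (fun t _ => (t < k)%N))
    (mask_proj (fun t j => (t < 0)%N || (j == i)))
    (mask_proj (fun t j => (t < k)%N && (j == i))).

Lemma ln_Gamma_img_diff tl k (tlE : forall t : 'I_H, lost tl t = (k <= t)%N) x :
  0 < Gamma_full x ->
  ln (Gamma_img tl x) - ln (Gamma_img (Some 0%N) x) =
  \sum_n history_cmi k n x + \sum_i agent_cmi k i x.
Proof.
move=> Px; have [_ ->] := ln_Gamma_img tlE Px.
have [_ ->] := ln_Gamma_img (tl := Some 0%N) (k := 0) (fun t => erefl) Px.
rewrite /history_cmi /agent_cmi /cmi_density.
under [X in _ = X + _]eq_bigr do rewrite marginal_mask_pair marg_none ln1 addr0.
under [X in _ = _ + X]eq_bigr do rewrite marginal_mask_pair.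
pose L n := marg (fun t j => (t < k)%N && (j < n)%N) x.
have L_succ (n : 'I_N) :
    marg (fun t j => (t < k)%N && (j < n)%N || (t < k)%N && (j == n)) x = L n.+1.
  by rewrite /L (@eq_mask_proj _ (fun t j => (t < k)%N && (j < n.+1)%N)) // => t j;
    rewrite -andb_orr ltnS (leq_eqVlt j) orbC.
have LN : L N = marg (fun t _ => (t < k)%N) x.
  by rewrite /L (@eq_mask_proj _ (fun t _ => (t < k)%N)) // => t j; rewrite ltn_ord andbT.
have L0 : L 0%N = 1.
  by rewrite /L (@eq_mask_proj _ (fun _ _ => false)) ?marg_none // => t j; rewrite andbF.
have W0 i : marg (fun t j => (t < k)%N || ((t < 0)%N || (j == i))) x =
    marg (fun t j => (t < k)%N || (j == i)) x.
  by rewrite (@eq_mask_proj _ (fun t j => (t < k)%N || (j == i))).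
have V0 : marg (fun t _ => (t < 0)%N) x = 1.
  by rewrite marginal_prefix /prefix_weight big_pred0.
(* The first sum telescopes over the agents (chain rule for the total correlation). *)
under [X in _ = X + _]eq_bigr do rewrite L_succ.
under [X in _ = _ + X]eq_bigr do rewrite W0.
have tele : \sum_(n < N) (ln (L n.+1) - ln (L n)) = ln (marg (fun t _ => (t < k)%N) x).
  rewrite -(big_mkord xpredT (fun n => ln (L n.+1) - ln (L n))) telescope_sumr //.
  by rewrite LN L0 ln1 subr0.
rewrite V0 ln1 [X in _ = X + _]sumrB tele !sumrB !big_split /= big1_eq; ring.
Qed.

Lemma KL_horizon_le tl :
  (KL_horizon (Defs.Gamma_full sI T pi) (Defs.Gamma_img sI T pi tl) H <=
   KL_horizon (Defs.Gamma_full sI T pi) (Defs.Gamma_img sI T pi (Some 0%N)) H)%E.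
Proof.
have [k tlE] : exists k, forall t : 'I_H, lost tl t = (k <= t)%N.
  by case: tl => [k|]; [exists k | exists H => t; rewrite /lost leqNgt ltn_ord].
have tl0E : forall t : 'I_H, lost (Some 0%N) t = (0 <= t)%N by [].
have klE tl' k' (tlE' : forall t : 'I_H, lost tl' t = (k' <= t)%N) x :
    kl_term (Gamma_full x) (Gamma_img tl' x) =
    (Gamma_full x * ln (Gamma_full x / Gamma_img tl' x))%:E.
  by apply: kl_termE (Gamma_full_ge0 x) _ => Px; case: (ln_Gamma_img tlE' Px).
rewrite /KL_horizon (eq_bigr _ (fun x _ => klE _ _ tlE x)).
rewrite (eq_bigr _ (fun x _ => klE _ _ tl0E x)) !sumEFin lee_fin -subr_ge0 -sumrB.
have diffE x : Gamma_full x * ln (Gamma_full x / Gamma_img (Some 0%N) x) -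
    Gamma_full x * ln (Gamma_full x / Gamma_img tl x) =
    Gamma_full x * (\sum_n history_cmi k n x + \sum_i agent_cmi k i x).
  have [-> | Px] := eqVneq (Gamma_full x) 0; first by rewrite !mul0r subr0.
  have {}Px : 0 < Gamma_full x by rewrite lt_def Px Gamma_full_ge0.
  have [Qk_gt0 _] := ln_Gamma_img tlE Px; have [Q0_gt0 _] := ln_Gamma_img tl0E Px.
  rewrite -(ln_Gamma_img_diff tlE Px) !ln_div ?posrE //; ring.
rewrite (eq_bigr _ (fun x _ => diffE x)).
under eq_bigr do rewrite mulrDr !big_distrr.
rewrite big_split /= exchange_big [X in _ <= _ + X]exchange_big /=.
apply: addr_ge0; apply: sumr_ge0 => n _; rewrite /history_cmi /agent_cmi.
  by apply: (cond_mutual_info_ge0 Gamma_full_ge0) => y x; apply: mask_proj_sub.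
apply: (cond_mutual_info_ge0 Gamma_full_ge0) => y x; apply: mask_proj_sub => t j.
  by case/andP.
by case/andP => _ ->; rewrite orbT.
Qed.

End Game.

Theorem lemma1 (R : realType) (N : nat) (S A : 'I_N -> finType)
  (sI : forall i, S i) (T : forall i, S i -> A i -> S i -> R)
  (pi : jstate S -> jact A -> R)
  (T_ge0 : forall i s a y, 0 <= T i s a y)
  (T_sum1 : forall i s a, \sum_(y : S i) T i s a y = 1)
  (pi_ge0 : forall s a, 0 <= pi s a)
  (pi_sum1 : forall s, \sum_(a : jact A) pi s a = 1)
  (tl : option nat) :
  (KL (Gamma_full sI T pi) (Gamma_img sI T pi tl)
     <= KL (Gamma_full sI T pi) (Gamma_img sI T pi (Some 0%N)))%E.
Proof.
apply: ge_ereal_sup => _ [H _ <-].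
apply: le_trans (KL_horizon_le sI T_ge0 T_sum1 pi_ge0 pi_sum1 H tl) _.
by apply: ereal_sup_ubound; exists H.
Qed.
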